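(* Let $\lambda>1$. For all $\mu\in\mathscr P(\mathcal K)$ and $\pi\in\Delta_k$, $$\Psi^\lambda_\star(\mu)\le\frac{2^\lambda\,\Delta_\star(\mu)^{\lambda-1}\,\Delta(\pi,\mu)}{\mathrm I(\pi,\mu)},$$ in both the standard and Rustichini settings (with the conventions $0/0=0$ and $c/0=\infty$ for $c>0$).
   Context: A $k$-action partial monitoring game: set $\mathcal Z$, loss $\mathcal L:[k]\times\mathcal Z\to[0,1]$, signal $\mathcal S:[k]\times\mathcal Z\to\Sigma$, $k$ finite. $\mathcal K$ = finitely supported probability distributions on $\mathcal Z$; $\Delta_k$ = probability simplex on $[k]$; $\mathcal L(a,x)=\sum_z x(z)\mathcal L(a,z)$, $\mathcal L(\pi,x)=\sum_a\pi(a)\mathcal L(a,x)$; $\mathcal S(a,x)$ = law of $\mathcal S(a,z)$, $z\sim x$. Standard setting: $\mathcal Z$ arbitrary, $\mathcal V(\pi,x)=\mathcal L(\pi,x)$, $\mathcal V_\star(x)=\min_a\mathcal L(a,x)$. Rustichini setting: $\mathcal Z$ finite, $x\,\mathrm R\,y$ iff $\mathcal S(a,x)=\mathcal S(a,y)\ \forall a$, $\mathcal V(\pi,x)=\sup_{y\,\mathrm R\,x}\mathcal L(\pi,y)$, $\mathcal V_\star(x)=\min_{\pi\in\Delta_k}\mathcal V(\pi,x)$. $\mathscr P(\mathcal K)$ = finitely supported probability measures on $\mathcal K$. For $\mu\in\mathscr P(\mathcal K)$: $\mathcal S(a,\mu)=\mathcal S(a,\sum_x\mu(x)x)$; $\mathrm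 I(\pi,\mu)=\sum_a\pi(a)\sum_{x\in\operatorname{spt}\mu}\operatorname{KL}(\mathcal S(a,\mu),\mathcal S(a,x))$; $\Delta(\pi,\mu)=\sum_x\mu(x)(\mathcal V(\pi,x)-\mathcal V_\star(x))$; $\Delta_\star(\mu)=\min_{\pi\in\Delta_k}\Delta(\pi,\mu)$; $\Psi^\lambda(\pi,\mu)=\Delta(\pi,\mu)^\lambda/\mathrm I(\pi,\mu)$; $\Psi^\lambda_\star(\mu)=\inf_{\pi\in\Delta_k}\Psi^\lambda(\pi,\mu)$. *)

From HB Require Import structures.
From mathcomp Require Import all_boot all_order all_algebra.
From mathcomp Require Import finmap.
From mathcomp Require Import all_classical all_reals all_analysis.
Set Implicit Arguments. Unset Strict Implicit. Unset Printing Implicit Defensive.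
Import Order.TTheory GRing.Theory Num.Theory.
Local Open Scope ring_scope.
Local Open Scope fset_scope.

(* finitely supported real functions on T (candidate distributions) *)
Definition fdist (R : realType) (T : choiceType) := {fsfun T -> R with 0}.

Definition is_dist (R : realType) (T : choiceType) (x : fdist R T) : Prop :=
  (forall t, 0 <= x t) /\ \sum_(t <- finsupp x) x t = 1.

Definition is_pmeasure (R : realType) (Z : choiceType)
  (mu : {fsfun fdist R Z -> R with 0}) : Prop :=
  [/\ forall x, 0 <= mu x, \sum_(x <- finsupp mu) mu x = 1
    & forall x, x \in finsupp mu -> is_dist x].

Definition in_simplex (R : realType) (k : nat) (pi : 'I_k -> R) : Prop :=
  (forall a, 0 <= pi a) /\ \sum_(a < k) pi a = 1.

Definition lossx (R : realType) (Z : choiceType) (k : nat)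
  (L : 'I_k -> Z -> R) (a : 'I_k) (x : fdist R Z) : R :=
  \sum_(z <- finsupp x) x z * L a z.
Definition losspi (R : realType) (Z : choiceType) (k : nat)
  (L : 'I_k -> Z -> R) (pi : 'I_k -> R) (x : fdist R Z) : R :=
  \sum_(a < k) pi a * lossx L a x.

Definition law (R : realType) (Z Sigma : choiceType) (f : Z -> Sigma)
  (x : fdist R Z) : fdist R Sigma :=
  [fsfun s in [fset f z | z in finsupp x] => \sum_(z <- finsupp x | f z == s) x z].

Definition mixture (R : realType) (Z : choiceType)
  (mu : {fsfun fdist R Z -> R with 0}) : fdist R Z :=
  [fsfun z in \bigcup_(x <- finsupp mu) finsupp x =>
     \sum_(x <- finsupp mu) mu x * x z].

Definition KL (R : realType) (Sigma : choiceType) (p q : fdist R Sigma) : \bar R :=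
  if all (fun s => 0 < q s) (finsupp p)
  then (\sum_(s <- finsupp p) p s * ln (p s / q s))%:E
  else +oo%E.

Definition info (R : realType) (Z Sigma : choiceType) (k : nat)
  (S : 'I_k -> Z -> Sigma) (pi : 'I_k -> R)
  (mu : {fsfun fdist R Z -> R with 0}) : \bar R :=
  (\sum_(a < k) (pi a)%:E *
     \sum_(x <- finsupp mu) KL (law (S a) (mixture mu)) (law (S a) x))%E.

Definition gap (R : realType) (Z : choiceType) (k : nat)
  (V : ('I_k -> R) -> fdist R Z -> R) (Vstar : fdist R Z -> R)
  (pi : 'I_k -> R) (mu : {fsfun fdist R Z -> R with 0}) : R :=
  \sum_(x <- finsupp mu) mu x * (V pi x - Vstar x).

(* Delta_star(mu) = min over the simplex (attained; written as inf) *)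
Definition gapstar (R : realType) (Z : choiceType) (k : nat)
  (V : ('I_k -> R) -> fdist R Z -> R) (Vstar : fdist R Z -> R)
  (mu : {fsfun fdist R Z -> R with 0}) : R :=
  inf [set gap V Vstar pi mu | pi in [set pi | @in_simplex R k pi]].

Definition ediv (R : realType) (c : R) (d : \bar R) : \bar R :=
  if d == 0%E then (if c == 0 then 0%E else +oo%E)
  else if d == +oo%E then 0%E else (c / fine d)%:E.

Definition Psi (R : realType) (Z Sigma : choiceType) (k : nat) (lam : R)
  (V : ('I_k -> R) -> fdist R Z -> R) (Vstar : fdist R Z -> R)
  (S : 'I_k -> Z -> Sigma) (pi : 'I_k -> R)
  (mu : {fsfun fdist R Z -> R with 0}) : \bar R :=
  ediv (gap V Vstar pi mu `^ lam) (info S pi mu).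
Definition Psistar (R : realType) (Z Sigma : choiceType) (k : nat) (lam : R)
  (V : ('I_k -> R) -> fdist R Z -> R) (Vstar : fdist R Z -> R)
  (S : 'I_k -> Z -> Sigma) (mu : {fsfun fdist R Z -> R with 0}) : \bar R :=
  ereal_inf [set Psi lam V Vstar S pi mu | pi in [set pi | @in_simplex R k pi]].

Definition V_std (R : realType) (Z : choiceType) (k : nat)
  (L : 'I_k -> Z -> R) (pi : 'I_k -> R) (x : fdist R Z) : R := losspi L pi x.
Definition Vstar_std (R : realType) (Z : choiceType) (k : nat)
  (L : 'I_k -> Z -> R) (x : fdist R Z) : R :=
  inf [set lossx L a x | a in [set: 'I_k]].

Definition sigeq (R : realType) (Z Sigma : choiceType) (k : nat)
  (S : 'I_k -> Z -> Sigma) (x y : fdist R Z) : Prop :=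
  forall a, law (S a) x = law (S a) y.
Definition V_rus (R : realType) (Z Sigma : choiceType) (k : nat)
  (L : 'I_k -> Z -> R) (S : 'I_k -> Z -> Sigma)
  (pi : 'I_k -> R) (x : fdist R Z) : R :=
  sup [set losspi L pi y | y in [set y : fdist R Z | is_dist y /\ sigeq S y x]].
Definition Vstar_rus (R : realType) (Z Sigma : choiceType) (k : nat)
  (L : 'I_k -> Z -> R) (S : 'I_k -> Z -> Sigma) (x : fdist R Z) : R :=
  inf [set V_rus L S pi x | pi in [set pi | @in_simplex R k pi]].

From Pilot Require Import Defs.
From HB Require Import structures.
From mathcomp Require Import all_boot all_order all_algebra.
From mathcomp Require Import finmap.
From mathcomp Require Import all_classical all_reals all_analysis.
From mathcomp Require Import ring lra.
Import Order.TTheory GRing.Theory Num.Theory.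
Import numFieldNormedType.Exports.
Local Open Scope ring_scope.
Local Open Scope classical_set_scope.

(* Let p* minimise Delta(., mu) over the simplex (it exists because Delta(., mu)
   is Lipschitz there) and put d = Delta*(mu) = Delta(p*, mu) <= D = Delta(pi, mu).
   For t = d / D the mixture p_t = (1 - t) p* + t pi satisfies
   Delta(p_t, mu) <= (1 - t) d + t D <= 2 d by convexity of V(., x), while
   I(., mu) is linear with nonnegative coefficients (KL divergences, by Gibbs'
   inequality), so I(p_t, mu) >= t I(pi, mu).  Hence
   Psi*(mu) <= Psi(p_t, mu) <= (2 d)^lam / (t I(pi, mu)) = 2^lam d^(lam-1) D / I(pi, mu).
   The cases d = 0, I(pi, mu) = 0 and I(pi, mu) = +oo follow from the division
   conventions.  Both settings fit: V(., x) is linear (standard) or a supremum of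
   linear maps (Rustichini), 1-Lipschitz for the l1 distance since losses lie in
   [0, 1], and V* <= V. *)

Section SimplexArgmin.
Variable R : realType.

Lemma klipschitz_continuous (V W : normedModType R) (C : R) (f : V -> W) :
  C.-lipschitz f -> continuous f.
Proof.
move=> lipf x; apply/cvgrPdist_lt => e e0.
have C1 : 0 < `|C| + 1 by rewrite ltr_pwDr // normr_ge0.
near=> t.
apply: le_lt_trans (lipf (x, t) (conj I I)) _ => /=.
apply: (@le_lt_trans _ _ ((`|C| + 1) * `|x - t|)).
  by apply: ler_wpM2r => //; rewrite (le_trans (ler_norm C)) // lerDl.
rewrite -ltr_pdivlMl // mulrC; near: t.
by apply: cvgr_dist_lt => //; exact: divr_gt0.
Unshelve. all: by end_near.
Qed.

Lemma sum_dist_coord_le {n} (u w : 'rV[R]_n) :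
  \sum_a `|u ord0 a - w ord0 a| <= n%:R * `|u - w|.
Proof.
apply: (@le_trans _ _ (\sum_(a < n) `|u - w|)); last first.
  by rewrite sumr_const card_ord mulr_natl.
apply: ler_sum => a _; rewrite [leRHS]/Num.norm /= mx_normrE.
have := le_bigmax _ (fun ij : 'I_1 * 'I_n => `|(u - w) ij.1 ij.2|) (ord0, a).
by rewrite !mxE.
Qed.

Variable k : nat.

Definition rV_simplex : set 'rV[R]_k := [set v | in_simplex (fun a => v ord0 a)].

Lemma closed_rV_simplex : closed rV_simplex.
Proof.
have -> : rV_simplex = \bigcap_(a in setT) (fun v => v ord0 a) @^-1` [set x | 0 <= x]
    `&` (fun v => \sum_a v ord0 a) @^-1` [set x | x = 1].
  apply/seteqP; split => v [v0 v1]; split => //.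
  - by move=> a _; exact: v0.
  - by move=> a; exact: v0.
apply: closedI.
  apply: closed_bigI => a _; apply: preimage_closed; last exact: closed_ge.
  by move=> v _; exact: coord_continuous.
apply: preimage_closed; last exact: closed_eq.
move=> v _; apply: (@klipschitz_continuous _ _ k%:R) => -[u w] _ /=.
by rewrite -sumrB (le_trans (ler_norm_sum _ _ _)) ?sum_dist_coord_le.
Qed.

Lemma compact_rV_simplex : compact rV_simplex.
Proof.
apply: subclosed_compact closed_rV_simplex
  (rV_compact (fun=> @segment_compact R 0 1)) _.
move=> v [v0 v1] a /=; rewrite in_itv /= v0 -v1.
by rewrite (bigD1 a) //= lerDl sumr_ge0.
Qed.

Lemma simplex_argmin (G : ('I_k -> R) -> R) (C : R) (pi : 'I_k -> R) :
  0 <= C -> (forall p q, `|G p - G q| <= C * \sum_a `|p a - q a|) ->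
  in_simplex pi -> exists2 ps, in_simplex ps & forall p, in_simplex p -> G ps <= G p.
Proof.
move=> C0 lipG hpi.
pose of_row (v : 'rV[R]_k) a := v ord0 a.
have of_rowK p : of_row (\row_a p a) = p by apply: funext => a; rewrite /of_row mxE.
have cont : continuous (G \o of_row).
  apply: (@klipschitz_continuous _ _ (C * k%:R)) => -[u w] _ /=.
  rewrite -mulrA; apply: le_trans (lipG _ _) _.
  by rewrite ler_wpM2l ?sum_dist_coord_le.
have [|c] := EVT_min_rV _ compact_rV_simplex (continuous_subspaceT cont).
  by exists (\row_a pi a); rewrite /rV_simplex /= -/(of_row _) of_rowK.
rewrite inE => hc cmin; exists (of_row c) => // p hp.
have := cmin (\row_a p a); rewrite /= of_rowK; apply.
by rewrite inE /rV_simplex /= -/(of_row _) of_rowK.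
Qed.

End SimplexArgmin.

Section Divergence.
Context {R : realType}.
Local Open Scope fset_scope.

Lemma sum_finsupp_sub {T : choiceType} {g : {fsfun T -> R with 0}} {B : {fset T}} :
  finsupp g `<=` B -> \sum_(t <- finsupp g) g t = \sum_(t <- B) g t.
Proof. by move=> gB; apply: big_fset_incl => // t _ /fsfun_dflt. Qed.

Context {Z Sigma : choiceType}.

Lemma lawE (f : Z -> Sigma) (x : fdist R Z) s :
  law f x s = \sum_(z <- finsupp x | f z == s) x z.
Proof.
rewrite /law fsfun_fun; case: ifP => // /negbT fxs.
apply/esym/big1_seq => z /andP[/eqP fzs zx].
by move: fxs; rewrite -fzs in_imfset.
Qed.

Lemma sum_law (f : Z -> Sigma) (x : fdist R Z) (B : seq Sigma) : uniq B ->
  \sum_(s <- B) law f x s = \sum_(z <- finsupp x | f z \in B) x z.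
Proof.
move=> uB; under eq_bigr do rewrite lawE big_mkcond.
rewrite exchange_big [RHS]big_mkcond; apply: eq_bigr => z _ /=.
rewrite -big_mkcond /=; case: ifPn => [fzB|fzNB].
  rewrite (eq_bigl (pred1 (f z))) => [|s]; last by rewrite /= eq_sym.
  by rewrite -big_filter filter_pred1_uniq // big_seq1.
by apply: big1_seq => s /andP[/eqP fzs sB]; move: fzNB; rewrite fzs sB.
Qed.

Lemma sum_law_le (f : Z -> Sigma) (x : fdist R Z) (B : seq Sigma) :
  uniq B -> (forall z, 0 <= x z) ->
  \sum_(s <- B) law f x s <= \sum_(z <- finsupp x) x z.
Proof.
move=> uB x0; rewrite sum_law // [leRHS](bigID (fun z => f z \in B)) /=.
by rewrite lerDl sumr_ge0.
Qed.

Lemma is_dist_law (f : Z -> Sigma) (x : fdist R Z) : is_dist x -> is_dist (law f x).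
Proof.
case=> x0 x1; split=> [s|]; first by rewrite lawE sumr_ge0.
rewrite (sum_finsupp_sub (finsupp_sub _ _ _)) sum_law ?fset_uniq // -x1.
rewrite big_seq_cond [RHS]big_seq_cond; apply: eq_bigl => z.
by apply/andP/andP => [[]|[zx _]] //; split=> //; exact: in_imfset.
Qed.

Lemma KL_ge0 (p q : fdist R Sigma) :
  is_dist p -> \sum_(s <- finsupp p) q s <= 1 -> (0 <= KL p q)%E.
Proof.
case=> p0 p1 q1; rewrite /KL; case: ifP => [/allP q_pos|_] //; rewrite lee_fin.
apply: (@le_trans _ _ (\sum_(s <- finsupp p) (p s - q s))).
  by rewrite sumrB p1 subr_ge0.
rewrite big_seq [leRHS]big_seq; apply: ler_sum => s sp.
have ps : 0 < p s by rewrite lt_neqAle eq_sym p0 andbT -mem_finsupp.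
have qs : 0 < q s := q_pos s sp.
have ln_le : ln (q s / p s) <= q s / p s - 1.
  by rewrite -[X in ln X](subrK 1) addrC le_ln1Dx // ltrBrDl subrr divr_gt0.
rewrite -invf_div lnV ?posrE ?divr_gt0 // mulrN lerNr opprB.
by apply: le_trans (ler_wpM2l (ltW ps) ln_le) _; rewrite mulrBr mulr1 mulrC divfK ?gt_eqF.
Qed.

Lemma mixtureE (mu : {fsfun fdist R Z -> R with 0}) z :
  mixture mu z = \sum_(x <- finsupp mu) mu x * x z.
Proof.
rewrite /mixture fsfun_fun; case: ifPn => // zNK.
apply/esym/big1_seq => x /andP[_ xmu].
suff zNx : z \notin finsupp x by rewrite (fsfun_dflt zNx) mulr0.
by apply: contra zNK; apply/fsubsetP; exact: bigfcup_sup.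
Qed.

Lemma is_dist_mixture (mu : {fsfun fdist R Z -> R with 0}) :
  is_pmeasure mu -> is_dist (mixture mu).
Proof.
case=> mu0 mu1 mu_dist; split=> [z|].
  rewrite mixtureE big_seq; apply: sumr_ge0 => x xmu.
  by rewrite mulr_ge0 //; exact: (mu_dist x xmu).1.
rewrite (@sum_finsupp_sub _ (mixture mu) (\bigcup_(x <- finsupp mu) finsupp x));
  last exact: finsupp_sub.
rewrite (eq_bigr _ (fun z _ => mixtureE mu z)).
rewrite exchange_big -[RHS]mu1 big_seq [RHS]big_seq; apply: eq_bigr => x xmu.
rewrite -mulr_sumr -(sum_finsupp_sub (bigfcup_sup _ xmu isT)).
by rewrite (mu_dist x xmu).2 mulr1.
Qed.

Lemma sum_KL_law_mixture_ge0 (f : Z -> Sigma) (mu : {fsfun fdist R Z -> R with 0}) :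
  is_pmeasure mu ->
  (0 <= \sum_(x <- finsupp mu) KL (law f (mixture mu)) (law f x))%E.
Proof.
move=> hmu; rewrite big_seq; apply: sume_ge0 => x xmu.
have [_ _ /(_ x xmu) [x0 x1]] := hmu.
apply: KL_ge0; first exact/is_dist_law/is_dist_mixture.
by rewrite -x1 sum_law_le ?fset_uniq.
Qed.

Context {k : nat}.

Lemma info_ge0 (S : 'I_k -> Z -> Sigma) (pi : 'I_k -> R) {mu} :
  is_pmeasure mu -> (forall a, 0 <= pi a) -> (0 <= info S pi mu)%E.
Proof.
move=> hmu pi0; apply: sume_ge0 => a _.
by rewrite mule_ge0 ?lee_fin ?sum_KL_law_mixture_ge0.
Qed.

Lemma info_scale_le (S : 'I_k -> Z -> Sigma) (pi p : 'I_k -> R) {mu} (t : R) :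
  is_pmeasure mu -> 0 <= t -> (forall a, 0 <= pi a) -> (forall a, t * pi a <= p a) ->
  (t%:E * info S pi mu <= info S p mu)%E.
Proof.
move=> hmu t0 pi0 tpi_le; rewrite /info ge0_sume_distrr => [|a _]; last first.
  by rewrite mule_ge0 ?lee_fin ?sum_KL_law_mixture_ge0.
apply: lee_sum => a _; rewrite muleA -EFinM.
by apply: lee_wpmul2r; rewrite ?lee_fin ?sum_KL_law_mixture_ge0.
Qed.

End Divergence.

Section ExtendedDivision.
Variable R : realType.
Local Open Scope ereal_scope.

Lemma ediv0 (d : \bar R) : ediv 0 d = 0.
Proof. by rewrite /ediv eqxx mul0r; case: ifP => //; case: ifP. Qed.

Lemma edivy (c : R) : ediv c +oo = 0%:E.
Proof. by []. Qed.

Lemma ediv_ge0 (c : R) (d : \bar R) : (0 <= c)%R -> 0 <= d -> 0 <= ediv c d.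
Proof.
move=> c0; case: d => [r| |] // r0; rewrite /ediv //=.
by case: ifP => _; [case: ifP | rewrite lee_fin divr_ge0 // -lee_fin].
Qed.

Lemma ediv_le (c c' i : R) (d : \bar R) :
  (0 <= c <= c')%R -> (0 < i)%R -> i%:E <= d -> ediv c d <= (c' / i)%:E.
Proof.
move=> /andP[c0 cc'] i0; case: d => [j| |] //.
  rewrite lee_fin => ij; have j0 : (0 < j)%R := lt_le_trans i0 ij.
  rewrite /ediv eqe gt_eqF //= lee_fin.
  apply: ler_pM => //; first by rewrite invr_ge0 ltW.
  by rewrite lef_pV2 ?posrE.
by move=> _; rewrite edivy lee_fin divr_ge0 ?(le_trans c0 cc') ?ltW.
Qed.

End ExtendedDivision.

Lemma powR_double_div_ratio {R : realType} (lam d D r : R) :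
  0 < d -> 0 < D -> 0 < r ->
  2 `^ lam * d `^ (lam - 1) * D / r = (2 * d) `^ lam / (d / D * r).
Proof.
move=> d_gt0 D_gt0 r_gt0.
have d_pow : d `^ lam = d `^ (lam - 1) * d.
  by rewrite -[in LHS](subrK 1 lam) [LHS]powRD ?(gt_eqF d_gt0) ?implybT // powRr1 // ltW.
by rewrite powRM ?ltW // d_pow; field; rewrite !gt_eqF.
Qed.

Lemma in_simplex_convex {R : realType} {k : nat} {p q : 'I_k -> R} {t : R} :
  in_simplex p -> in_simplex q -> 0 <= t <= 1 ->
  in_simplex (fun a => (1 - t) * p a + t * q a).
Proof.
move=> [p0 p1] [q0 q1] /andP[t0 t1]; split=> [a|].
  by rewrite addr_ge0 // mulr_ge0 // subr_ge0.
by rewrite big_split /= -!mulr_sumr p1 q1 !mulr1 subrK.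
Qed.

Section GapBound.
Variables (R : realType) (Z Sigma : choiceType) (k : nat).
Variables (V : ('I_k -> R) -> fdist R Z -> R) (Vstar : fdist R Z -> R).
Variables (S : 'I_k -> Z -> Sigma) (mu : {fsfun fdist R Z -> R with 0}).
Hypothesis mu_pmeasure : is_pmeasure mu.
Hypothesis V_convex : forall p q t x,
  in_simplex p -> in_simplex q -> 0 <= t <= 1 -> x \in finsupp mu ->
  V (fun a => (1 - t) * p a + t * q a) x <= (1 - t) * V p x + t * V q x.
Hypothesis V_lipschitz : forall p q x, x \in finsupp mu ->
  `|V p x - V q x| <= \sum_a `|p a - q a|.
Hypothesis Vstar_le : forall p x, in_simplex p -> x \in finsupp mu -> Vstar x <= V p x.

Local Notation gap p := (gap V Vstar p mu).

Lemma gap_lipschitz (p q : 'I_k -> R) : `|gap p - gap q| <= \sum_a `|p a - q a|.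
Proof.
have [mu0 mu1 _] := mu_pmeasure.
rewrite /Defs.gap -sumrB (le_trans (ler_norm_sum _ _ _)) //.
rewrite -[leRHS]mul1r -mu1 mulr_suml big_seq [leRHS]big_seq.
apply: ler_sum => x xmu; rewrite -mulrBr normrM ger0_norm //.
by apply: ler_wpM2l => //; rewrite opprB addrA subrK V_lipschitz.
Qed.

Lemma gap_ge0 {p : 'I_k -> R} : in_simplex p -> 0 <= gap p.
Proof.
move=> hp; rewrite /Defs.gap big_seq; apply: sumr_ge0 => x xmu.
by rewrite mulr_ge0 ?subr_ge0 ?Vstar_le //; case: mu_pmeasure.
Qed.

Lemma gap_convex {p q : 'I_k -> R} {t : R} :
  in_simplex p -> in_simplex q -> 0 <= t <= 1 ->
  gap (fun a => (1 - t) * p a + t * q a) <= (1 - t) * gap p + t * gap q.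
Proof.
move=> hp hq ht; have [mu0 _ _] := mu_pmeasure.
rewrite /Defs.gap !mulr_sumr -big_split /= big_seq [leRHS]big_seq.
apply: ler_sum => x xmu; rewrite mulrCA [X in _ <= _ + X]mulrCA -mulrDr.
apply: ler_wpM2l => //.
rewrite (_ : (1 - t) * (V p x - Vstar x) + t * (V q x - Vstar x) =
             (1 - t) * V p x + t * V q x - Vstar x); last by ring.
by rewrite lerD2r V_convex.
Qed.

Lemma gap_argmin {p0 : 'I_k -> R} : in_simplex p0 ->
  exists2 ps, in_simplex ps & forall p, in_simplex p -> gap ps <= gap p.
Proof. by apply: (@simplex_argmin R k _ 1) => // p q; rewrite mul1r gap_lipschitz. Qed.

Lemma gapstar_argmin {ps : 'I_k -> R} : in_simplex ps ->
  (forall p, in_simplex p -> gap ps <= gap p) -> gapstar V Vstar mu = gap ps.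
Proof.
move=> hps ps_min; apply/le_anti/andP; split.
  by apply: ge_inf; [exists (gap ps) => _ [p hp <-]; exact: ps_min | exists ps].
by apply: lb_le_inf; [exists (gap ps), ps | move=> _ [p hp <-]; exact: ps_min].
Qed.

Lemma Psistar_le_Psi (lam : R) {p : 'I_k -> R} : in_simplex p ->
  (Psistar lam V Vstar S mu <= Psi lam V Vstar S p mu)%E.
Proof. by move=> hp; apply: ereal_inf_lbound; exists p. Qed.

Lemma Psistar_le_mix_bound (lam : R) (ps pi : 'I_k -> R) (r : R) :
  0 <= lam -> in_simplex ps -> in_simplex pi -> 0 < gap ps <= gap pi ->
  0 < r -> info S pi mu = r%:E ->
  (Psistar lam V Vstar S mu <=
   ((2 * gap ps) `^ lam / (gap ps / gap pi * r))%:E)%E.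
Proof.
move=> lam_ge0 hps hpi /andP[d_gt0 dD] r_gt0 EI.
set d := gap ps; set D := gap pi; pose t := d / D.
have D_gt0 : 0 < D := lt_le_trans d_gt0 dD.
have tD : t * D = d by rewrite divfK ?gt_eqF.
have t01 : 0 <= t <= 1.
  by rewrite /t divr_ge0 ?(ltW d_gt0) ?(ltW D_gt0) //= ler_pdivrMr // mul1r.
pose pt a := (1 - t) * ps a + t * pi a.
have hpt : in_simplex pt := in_simplex_convex hps hpi t01.
have gap_pt : gap pt <= 2 * d.
  apply: le_trans (gap_convex hps hpi t01) _; rewrite -/d -/D tD mulrBl mul1r.
  have td_ge0 : 0 <= t * d := mulr_ge0 (andP t01).1 (ltW d_gt0).
  lra.
have info_pt : ((t * r)%:E <= info S pt mu)%E.
  rewrite EFinM -EI info_scale_le ?(andP t01).1 //; first exact: hpi.1.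
  by move=> a; rewrite lerDr mulr_ge0 ?subr_ge0 ?(andP t01).2 //; exact: hps.1.
apply: le_trans (Psistar_le_Psi lam hpt) _; apply: ediv_le info_pt.
  by rewrite powR_ge0 ge0_ler_powR // nnegrE ?gap_ge0 // mulr_ge0 ?(ltW d_gt0).
by rewrite mulr_gt0 // divr_gt0.
Qed.

Theorem Psistar_le_gap_ratio (lam : R) (pi : 'I_k -> R) : 1 < lam -> in_simplex pi ->
  (Psistar lam V Vstar S mu <=
   ediv (2 `^ lam * gapstar V Vstar mu `^ (lam - 1) * gap pi) (info S pi mu))%E.
Proof.
move=> lam_gt1 hpi; have lam_gt0 : 0 < lam := lt_trans ltr01 lam_gt1.
have [ps hps ps_min] := gap_argmin hpi; rewrite (gapstar_argmin hps ps_min).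
have d_ge0 : 0 <= gap ps := gap_ge0 hps.
have dD : gap ps <= gap pi := ps_min pi hpi.
have [d_le0|d_gt0] := lerP (gap ps) 0.
  apply: le_trans (Psistar_le_Psi lam hps) _.
  rewrite /Psi (le_anti (introT andP (conj d_le0 d_ge0))) powR0 ?gt_eqF // ediv0.
  rewrite ediv_ge0 ?info_ge0 ?mulr_ge0 ?powR_ge0 ?(le_trans d_ge0) //; exact: hpi.1.
case EI : (info S pi mu) (info_ge0 S pi mu_pmeasure hpi.1) => [r| |] // r_ge0.
- have [r_le0|r_gt0] := lerP r 0.
    have -> : r = 0 by apply/le_anti; rewrite r_le0 -lee_fin.
    have c_gt0 : 0 < 2 `^ lam * gap ps `^ (lam - 1) * gap pi.
      by rewrite !mulr_gt0 ?powR_gt0 // (lt_le_trans d_gt0).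
    by rewrite /ediv eqxx (gt_eqF c_gt0) leey.
  rewrite /ediv eqe (gt_eqF r_gt0) /=.
  rewrite (powR_double_div_ratio _ _ _ _ d_gt0 (lt_le_trans d_gt0 dD) r_gt0).
  by apply: Psistar_le_mix_bound; rewrite ?d_gt0 ?(ltW lam_gt0).
- by apply: le_trans (Psistar_le_Psi lam hpi) _; rewrite /Psi EI !edivy.
Qed.

End GapBound.

Section Losses.
Context {R : realType} {Z : choiceType} {k : nat}.
Variable L : 'I_k -> Z -> R.
Hypothesis L01 : forall a z, 0 <= L a z <= 1.

Lemma lossx_ge0_le1 a {x : fdist R Z} : is_dist x -> 0 <= lossx L a x <= 1.
Proof.
case=> x0 x1; rewrite sumr_ge0 => [|z _]; last by rewrite mulr_ge0 ?(andP (L01 a z)).1.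
by rewrite -x1 ler_sum // => z _; rewrite ler_piMr ?(andP (L01 a z)).2.
Qed.

Lemma losspi_mix (p q : 'I_k -> R) (t : R) (x : fdist R Z) :
  losspi L (fun a => (1 - t) * p a + t * q a) x =
  (1 - t) * losspi L p x + t * losspi L q x.
Proof. by rewrite /losspi !mulr_sumr -big_split; apply: eq_bigr => a _ /=; ring. Qed.

Lemma losspi_lipschitz (p q : 'I_k -> R) {x : fdist R Z} : is_dist x ->
  `|losspi L p x - losspi L q x| <= \sum_a `|p a - q a|.
Proof.
move=> hx; rewrite /losspi -sumrB (le_trans (ler_norm_sum _ _ _)) //.
apply: ler_sum => a _; rewrite -mulrBl normrM.
by have /andP[l0 l1] := lossx_ge0_le1 a hx; rewrite ler_piMr // ger0_norm.
Qed.

Lemma losspi_ge0 {p : 'I_k -> R} {x : fdist R Z} : is_dist x -> in_simplex p ->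
  0 <= losspi L p x.
Proof.
move=> hx [p0 _]; apply: sumr_ge0 => a _.
by rewrite mulr_ge0 ?(andP (lossx_ge0_le1 a hx)).1.
Qed.

Lemma Vstar_std_le {p : 'I_k -> R} {x : fdist R Z} : is_dist x -> in_simplex p ->
  Vstar_std L x <= V_std L p x.
Proof.
move=> hx [p0 p1]; rewrite /V_std /losspi -[Vstar_std L x]mul1r -p1 mulr_suml.
apply: ler_sum => a _; apply: ler_wpM2l => //; apply: ge_inf; last by exists a.
by exists 0 => _ [b _ <-]; rewrite (andP (lossx_ge0_le1 b hx)).1.
Qed.

Variables (Sigma : choiceType) (S : 'I_k -> Z -> Sigma).

Local Notation indist x := [set y : fdist R Z | is_dist y /\ sigeq S y x].

Lemma losspi_le_V_rus (p : 'I_k -> R) {x y : fdist R Z} : y \in indist x ->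
  losspi L p y <= V_rus L S p x.
Proof.
rewrite inE => hy; apply: ub_le_sup; last by exists y.
exists (\sum_a `|p a|) => _ [z [hz _] <-].
have := losspi_lipschitz p (fun=> 0) hz.
rewrite [losspi L (fun=> 0) z]big1 => [|a _]; last by rewrite mul0r.
by rewrite subr0 => /(le_trans (ler_norm _)); under eq_bigr do rewrite subr0.
Qed.

Lemma V_rus_le (p q : 'I_k -> R) {x : fdist R Z} : is_dist x ->
  V_rus L S p x <= V_rus L S q x + \sum_a `|p a - q a|.
Proof.
move=> hx; apply: ge_sup; first by exists (losspi L p x), x.
move=> _ [y [hy hyx] <-].
have := losspi_le_V_rus q (mem_set (conj hy hyx) : y \in indist x).
by have := losspi_lipschitz p q hy; rewrite ler_norml => /andP[_]; lra.
Qed.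

Lemma V_rus_lipschitz (p q : 'I_k -> R) {x : fdist R Z} : is_dist x ->
  `|V_rus L S p x - V_rus L S q x| <= \sum_a `|p a - q a|.
Proof.
move=> hx; have := V_rus_le p q hx; have := V_rus_le q p hx.
rewrite (eq_bigr _ (fun a _ => distrC (q a) (p a))) => le_qp le_pq.
by rewrite ler_norml; apply/andP; split; lra.
Qed.

Lemma V_rus_convex (p q : 'I_k -> R) {t : R} {x : fdist R Z} : is_dist x -> 0 <= t <= 1 ->
  V_rus L S (fun a => (1 - t) * p a + t * q a) x <=
  (1 - t) * V_rus L S p x + t * V_rus L S q x.
Proof.
move=> hx /andP[t0 t1]; apply: ge_sup; first by eexists; exists x.
move=> _ [y hy <-]; rewrite losspi_mix.
by rewrite lerD // ler_wpM2l ?subr_ge0 // losspi_le_V_rus // inE.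
Qed.

Lemma Vstar_rus_le {p : 'I_k -> R} {x : fdist R Z} : is_dist x -> in_simplex p ->
  Vstar_rus L S x <= V_rus L S p x.
Proof.
move=> hx hp; apply: ge_inf; last by exists p.
exists 0 => _ [q hq <-]; apply: le_trans (losspi_ge0 hx hq) _.
by rewrite losspi_le_V_rus // inE.
Qed.

End Losses.

Theorem lemma2 (R : realType) (lam : R) (hlam : 1 < lam) :
  (* standard setting *)
  (forall (Z Sigma : choiceType) (k : nat)
     (L : 'I_k -> Z -> R) (S : 'I_k -> Z -> Sigma),
     (forall a z, 0 <= L a z <= 1) ->
     forall (mu : {fsfun fdist R Z -> R with 0}) (pi : 'I_k -> R),
     is_pmeasure mu -> in_simplex pi ->
     (Psistar lam (V_std L) (Vstar_std L) S mu <=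
      ediv (2 `^ lam * gapstar (V_std L) (Vstar_std L) mu `^ (lam - 1)
              * gap (V_std L) (Vstar_std L) pi mu)
           (info S pi mu))%E)
  /\
  (* Rustichini setting *)
  (forall (Z : finType) (Sigma : choiceType) (k : nat)
     (L : 'I_k -> Z -> R) (S : 'I_k -> Z -> Sigma),
     (forall a z, 0 <= L a z <= 1) ->
     forall (mu : {fsfun fdist R Z -> R with 0}) (pi : 'I_k -> R),
     is_pmeasure mu -> in_simplex pi ->
     (Psistar lam (V_rus L S) (Vstar_rus L S) S mu <=
      ediv (2 `^ lam * gapstar (V_rus L S) (Vstar_rus L S) mu `^ (lam - 1)
              * gap (V_rus L S) (Vstar_rus L S) pi mu)
           (info S pi mu))%E).
Proof.
split=> Z Sigma k L S L01 mu pi hmu hpi; apply: Psistar_le_gap_ratio => //;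
  have [_ _ mu_dist] := hmu.
- by move=> p q t x _ _ _ _; rewrite /V_std losspi_mix.
- by move=> p q x /mu_dist; exact: losspi_lipschitz.
- by move=> p x hp /mu_dist hx; exact: Vstar_std_le.
- by move=> p q t x _ _ t01 /mu_dist hx; exact: V_rus_convex.
- by move=> p q x /mu_dist; exact: V_rus_lipschitz.
- by move=> p x hp /mu_dist hx; exact: Vstar_rus_le.
Qed.
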